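(* Fix $0<q<1$. For $t_0>\log(1/q)$ and $\varepsilon>0$ define $$\omega^*(\varepsilon;t_0)=\sup\{|T_q(G')-t_0|:\ G\in\mathcal G,\ T_q(G)=t_0,\ \|G-G'\|\le\varepsilon\},$$ the supremum being over such $G$ and cdfs $G'$. Then for each fixed $t_0>\log(1/q)$, $$\omega^*(\varepsilon;t_0)\le\frac{q}{\log(1/q)}\,t_0e^{t_0}\,\varepsilon\,(1+o(1))\quad\text{as }\varepsilon\to0.$$
   Context: $E(t)=1-e^{-t}$, $\bar E=1-E$, $\bar G=1-G$. $\mathcal G=\{E\#F:F$ a probability distribution on $[1,\infty)\}$ with $(E\#F)(t)=\int E(t/\mu)\,dF(\mu)$. FDR functional $T_q(G)=\inf\{t:\bar G(t)\ge\frac1q\bar E(t)\}$ for any cdf $G$. $\|G-G'\|=\sup_t|G(t)-G'(t)|$ (Kolmogorov–Smirnov distance). *)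

From HB Require Import structures.
From mathcomp Require Import all_boot all_order all_algebra.
From mathcomp Require Import all_classical all_reals all_analysis.
Set Implicit Arguments. Unset Strict Implicit. Unset Printing Implicit Defensive.
Import Order.TTheory GRing.Theory Num.Theory.
Import numFieldNormedType.Exports.
Local Open Scope classical_set_scope.
Local Open Scope ring_scope.

Section Defs.
Variable R : realType.

Definition Ecdf (t : R) : R := if 0 <= t then 1 - expR (- t) else 0.

Definition is_cdf (G : R -> R) : Prop :=
  {homo G : x y / x <= y} /\
  (forall t, G x @[x --> t^'+] --> G t) /\
  (G x @[x --> -oo] --> (0:R)) /\
  (G x @[x --> +oo] --> (1:R)).

(* the class  \mathcal G = { E # F : F a probability distribution on [1,oo) } *)
Definition in_calG (G : R -> R) : Prop :=
  exists F : probability R R,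
    F `[(1:R), +oo[%classic = 1%E /\
    forall t, (G t)%:E = (\int[F]_(mu in setT) (Ecdf (t / mu))%:E)%E.

Definition ksdist (G G' : R -> R) : \bar R :=
  ereal_sup (range (fun t => (`|G t - G' t|)%:E)).

(* FDR functional T_q(G) = inf { t : 1 - G t >= (1/q)(1 - E t) }, inf of empty = +oo *)
Definition Tq (q : R) (G : R -> R) : \bar R :=
  ereal_inf [set t%:E | t in [set t : R | q^-1 * (1 - Ecdf t) <= 1 - G t]].

Definition omega_star (q eps t0 : R) : \bar R :=
  ereal_sup [set (`| Tq q G' - t0%:E |)%E | G' in
    [set G' : R -> R | is_cdf G' /\
       exists G, in_calG G /\ Tq q G = t0%:E /\ (ksdist G G' <= eps%:E)%E]].
End Defs.

From HB Require Import structures.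
From mathcomp Require Import all_boot all_order all_algebra.
From mathcomp Require Import all_classical all_reals all_analysis.
From mathcomp Require Import measurable_realfun ring lra.
Import Order.TTheory GRing.Theory Num.Theory.
Import numFieldNormedType.Exports.
Local Open Scope classical_set_scope.
Local Open Scope ring_scope.

Set Implicit Arguments. Unset Strict Implicit.

(* For G = E#F and t >= 0, h(t) := e^t (1 - G t) = \int e^{t (1 - 1/mu)} dF(mu) is
   the Laplace transform of a law on [0, 1].  Hence e^(s-t) h(t) <= h(s) for s <= t,
   which forces h(t0) = 1/q at t0 = T_q(G).  Since x ln x lies above its tangents,
   h(t0 + d) >= h(t0) (1 + (d / t0) ln h(t0)), and symmetrically to the left of t0,
   so h leaves the level 1/q at rate at least q^-1 ln(1/q) / t0.  A
   Kolmogorov-Smirnov perturbation of size eps moves e^t (1 - G t) by at most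
   e^t eps, hence moves the crossing point by at most about
   t0 e^t0 eps q / ln(1/q). *)

Lemma ler_of_expRN_mulr (R : realType) (x y r : R) : 0 < r ->
  (forall u, 0 < u -> u <= r -> expR (- u) * x <= y) -> x <= y.
Proof.
move=> r0 xle.
have expx : (fun u => expR (- u) * x) @ 0^'+ --> x.
  suff cont : (fun u => expR (- u) * x) @ 0 --> expR (- 0) * x.
    by rewrite oppr0 expR0 mul1r in cont; exact: cvg_within_filter.
  apply: cvgMr_tmp; apply: continuous_comp; [exact: opp_continuous | exact: continuous_expR].
apply: (cvgr_to_le expx); near=> u; apply: xle; near: u; first exact: nbhs_right_gt.
exact: nbhs_right_le.
Unshelve. all: end_near.
Qed.

Section tangent_inequalities.
Variable R : realType.

Lemma xlnx_ge_tangent (c x : R) : 0 < c -> 0 < x -> (ln c + 1) * x - c <= x * ln x.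
Proof.
move=> c0 x0; have := expR_ge1Dx (ln (c / x)).
rewrite lnK ?posrE ?divr_gt0 // lnM ?posrE ?invr_gt0 // lnV ?posrE //.
rewrite -(ler_pM2l x0) mulrCA divff ?gt_eqF // mulr1; lra.
Qed.

Lemma expR_shift_ge (c t d a : R) : 0 < c -> 0 < t -> 0 <= d ->
  expR (t * a) + d / t * ((ln c + 1) * expR (t * a) - c) <= expR ((t + d) * a).
Proof.
move=> c0 t0 d0; set X := expR (t * a).
have X0 : 0 < X := expR_gt0 _.
have lnX : ln X = t * a by rewrite expRK.
have tangent : d / t * ((ln c + 1) * X - c) <= X * (d * a).
  rewrite (_ : X * (d * a) = d / t * (X * ln X)); last by rewrite lnX; field; rewrite gt_eqF.
  by apply: ler_wpM2l; [exact: divr_ge0 d0 (ltW t0) | exact: xlnx_ge_tangent].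
have : X * (1 + d * a) <= X * expR (d * a) by rewrite ler_pM2l // expR_ge1Dx.
by rewrite [(t + d) * a]mulrDl expRD -/X; lra.
Qed.

Lemma expR_shift_le (c t s a : R) : 0 < c -> 0 < t -> 0 <= s -> 0 <= a <= 1 ->
  expR ((t - s) * a) <= expR (t * a) - s / ((1 + s) * t) * ((ln c + 1) * expR (t * a) - c).
Proof.
move=> c0 t0 s0 /andP[a0 a1]; set X := expR (t * a).
have X0 : 0 < X := expR_gt0 _.
have lnX : ln X = t * a by rewrite expRK.
have s1 : 0 < 1 + s by lra.
have tangent : s / ((1 + s) * t) * ((ln c + 1) * X - c) <= X * (s * a / (1 + s)).
  rewrite (_ : X * _ = s / ((1 + s) * t) * (X * ln X)).
    by apply: ler_wpM2l; [rewrite divr_ge0 // mulr_ge0 // ltW | exact: xlnx_ge_tangent].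
  by rewrite lnX; field; rewrite !gt_eqF.
have factor : 1 <= (1 - s * a / (1 + s)) * (1 + s * a).
  have -> : (1 - s * a / (1 + s)) * (1 + s * a) = 1 + s ^+ 2 * a * (1 - a) / (1 + s).
    by field; rewrite gt_eqF.
  rewrite lerDl; apply: divr_ge0 (ltW s1).
  by rewrite mulr_ge0 ?subr_ge0 // mulr_ge0 ?sqr_ge0.
have split_exp : expR ((t - s) * a) * (1 + s * a) <= X.
  rewrite /X (_ : t * a = (t - s) * a + s * a); last by ring.
  by rewrite expRD ler_pM2l ?expR_gt0 ?expR_ge1Dx.
have m1 : 0 <= 1 - s * a / (1 + s).
  by rewrite subr_ge0 ler_pdivrMr // mul1r; nra.
suff : expR ((t - s) * a) <= (1 - s * a / (1 + s)) * X by lra.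
apply: le_trans (ler_wpM2l m1 split_exp).
by rewrite mulrCA ler_pMr ?expR_gt0.
Qed.

End tangent_inequalities.

Section concentrated_probability.
Context d (T : measurableType d) (R : realType) (P : probability T R).
Variables (D : set T) (mD : measurable D) (PD : P D = 1%E).

Lemma integral_concentrated (f : T -> \bar R) : P.-integrable setT f ->
  (\int[P]_(x in setT) f x = \int[P]_(x in D) f x)%E.
Proof.
move=> intf; have mDC : measurable (~` D) by exact: measurableC.
have PDC : P (~` D) = 0%E by rewrite probability_setC // PD subee.
by rewrite (negligible_integral mDC measurableT intf PDC) setTD setCK.
Qed.

Lemma integral_concentrated_le_cst (f : T -> \bar R) (g : R) :
  P.-integrable setT f -> (forall x, D x -> (f x <= g%:E)%E) ->
  (\int[P]_(x in setT) f x <= g%:E)%E.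
Proof.
move=> intf fg; rewrite (integral_concentrated intf).
apply: (@le_trans _ _ (\int[P]_(x in D) g%:E)%E).
  apply: le_integral => //; first exact: integrableS intf.
    exact: finite_measure_integrable_cst.
  by move=> x /[!inE] Dx; rewrite fg.
by rewrite integral_cst //= PD mule1.
Qed.

End concentrated_probability.

Section exponential_cdf.
Variable R : realType.

Lemma Ecdf_ge0 (x : R) : 0 <= Ecdf x.
Proof. by rewrite /Ecdf; case: ifPn => // x0; rewrite subr_ge0 expR_le1 oppr_le0. Qed.

Lemma Ecdf_le1 (x : R) : Ecdf x <= 1.
Proof. by rewrite /Ecdf; case: ifPn => // x0; rewrite gerBl expR_ge0. Qed.

Lemma Ecdf_nondecreasing : {homo @Ecdf R : x y / x <= y}.
Proof.
move=> x y xy; rewrite /Ecdf; case: ifPn => x0; last exact: (Ecdf_ge0 y).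
by rewrite (le_trans x0 xy) lerB // ler_expR lerN2.
Qed.

Lemma measurable_invr : measurable_fun [set: R] (@GRing.inv R).
Proof.
have -> : [set: R] = ~` [set 0] `|` [set 0] by rewrite setUC setUv.
have mC : measurable (~` [set (0:R)]) by exact: measurableC.
apply/(measurable_funU _ mC (measurable_set1 _)); split; last exact: measurable_fun_set1.
apply: open_continuous_measurable_fun.
  have -> : ~` [set (0:R)] = [set x | x != 0] by apply/seteqP; split => x /= /eqP.
  exact: open_neq.
by move=> x /[!inE] /eqP x0; apply: inv_continuous.
Qed.

Lemma measurable_Ecdf_div (t : R) : measurable_fun [set: R] (fun mu => Ecdf (t / mu)).
Proof.
apply: measurableT_comp; first exact: nondecreasing_measurable Ecdf_nondecreasing.
exact: measurable_funM measurable_invr.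
Qed.

Lemma Ecdf_div_integrable (P : probability R R) (t : R) :
  P.-integrable setT (EFin \o (fun mu => Ecdf (t / mu))).
Proof.
apply: measurable_bounded_integrable => //.
- exact: (le_lt_trans (probability_le1 P measurableT) (ltry 1)).
- exact: measurable_Ecdf_div.
- rewrite /bounded_near; near=> M => x _ /=.
  rewrite ger0_norm ?Ecdf_ge0 //; apply: le_trans (Ecdf_le1 _) _.
  by near: M; exact: nbhs_pinfty_ge.
Unshelve. all: end_near.
Qed.

Lemma expR_survival_Ecdf_div (t mu : R) : 0 <= t -> 0 < mu ->
  expR t * (1 - Ecdf (t / mu)) = expR (t * (1 - mu^-1)).
Proof.
move=> t0 mu0; rewrite /Ecdf (divr_ge0 t0 (ltW mu0)) subKr.
by rewrite -expRD mulrBr mulr1.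
Qed.

End exponential_cdf.

Section fdr_functional.
Variable R : realType.
Implicit Types (q t eps : R) (G H : R -> R).

Definition esurv G t : R := expR t * (1 - G t).

Definition fdr_admissible q G t : bool := q^-1 * (1 - Ecdf t) <= 1 - G t.

Lemma Tq_le q G t : fdr_admissible q G t -> (Tq q G <= t%:E)%E.
Proof. by move=> adm; apply: ereal_inf_lbound; exists t. Qed.

Lemma Tq_ge q G (t0 : R) : (forall t, fdr_admissible q G t -> t0 <= t) -> (t0%:E <= Tq q G)%E.
Proof. by move=> lb; apply: le_ereal_inf_tmp => _ [t adm <-]; rewrite lee_fin lb. Qed.

Lemma Tq_lt q G (t0 : R) : (Tq q G < t0%:E)%E -> exists2 t, fdr_admissible q G t & t < t0.
Proof. by move=> /ereal_inf_lt[_ [t adm <-]]; rewrite lte_fin; exists t. Qed.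

Lemma fdr_admissibleE q G t : 0 <= t -> fdr_admissible q G t = (q^-1 <= esurv G t).
Proof.
move=> t0; rewrite /fdr_admissible /esurv /Ecdf t0 subKr expRN mulrC.
by rewrite ler_pdivrMl ?expR_gt0.
Qed.

Lemma esurv_dist G H t : `|esurv G t - esurv H t| = expR t * `|G t - H t|.
Proof.
rewrite /esurv -mulrBr normrM gtr0_norm ?expR_gt0 // distrC.
by congr (_ * `|_|); ring.
Qed.

Lemma ksdist_le G H eps : (ksdist G H <= eps%:E)%E -> forall t, `|G t - H t| <= eps.
Proof.
move=> ks t; rewrite -lee_fin; apply: le_trans ks.
by apply: ereal_sup_ubound; exists t.
Qed.

End fdr_functional.

Section exponential_mixture.
Variable R : realType.
Variables (F : probability R R) (G : R -> R).
Hypothesis F_support : F `[(1:R), +oo[%classic = 1%E.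
Hypothesis G_mixture :
  forall t, (G t)%:E = (\int[F]_(mu in setT) (Ecdf (t / mu))%:E)%E.

Lemma G_ge0 (t : R) : 0 <= G t.
Proof. by rewrite -lee_fin G_mixture; apply: integral_ge0 => mu _; rewrite lee_fin Ecdf_ge0. Qed.

Lemma mixture_lin2_le (a b g t1 t2 : R) :
  (forall mu, 1 <= mu -> a * Ecdf (t1 / mu) + b * Ecdf (t2 / mu) <= g) ->
  a * G t1 + b * G t2 <= g.
Proof.
move=> pointwise; have int1 := integrableZl measurableT a (Ecdf_div_integrable F t1).
have int2 := integrableZl measurableT b (Ecdf_div_integrable F t2).
rewrite -lee_fin EFinD !EFinM !G_mixture.
rewrite -!integralZl ?Ecdf_div_integrable // -integralD //.
apply: (integral_concentrated_le_cst _ F_support) => //; first exact: integrableD.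
by move=> mu /= /[!in_itv] /= /andP[mu1 _]; rewrite -!EFinM -EFinD lee_fin pointwise.
Qed.

Lemma esurv_lin2_le (al be ga t1 t2 : R) : 0 <= t1 -> 0 <= t2 ->
  (forall a, 0 <= a <= 1 -> al * expR (t1 * a) + be * expR (t2 * a) <= ga) ->
  al * esurv G t1 + be * esurv G t2 <= ga.
Proof.
move=> t1_ge0 t2_ge0 pointwise.
suff : - (al * expR t1) * G t1 + - (be * expR t2) * G t2
    <= ga - al * expR t1 - be * expR t2 by rewrite /esurv; lra.
apply: mixture_lin2_le => mu mu1; have mu0 : 0 < mu := lt_le_trans ltr01 mu1.
have a01 : 0 <= 1 - mu^-1 <= 1.
  by rewrite subr_ge0 invf_le1 // mu1 lerBlDr lerDl invr_ge0 ltW.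
have := pointwise _ a01.
rewrite -!expR_survival_Ecdf_div //; lra.
Qed.

Lemma esurv_le_expR (s t : R) : 0 <= s -> s <= t -> expR (s - t) * esurv G t <= esurv G s.
Proof.
move=> s0 st; suff : expR (s - t) * esurv G t + (-1) * esurv G s <= 0 by lra.
apply: esurv_lin2_le (le_trans s0 st) s0 _ => a /andP[a0 a1].
by rewrite mulN1r subr_le0 -expRD ler_expR; nra.
Qed.

Lemma esurv_shift_ge (t d : R) : 0 < t -> 0 <= d -> 0 < esurv G t ->
  esurv G t * (1 + d / t * ln (esurv G t)) <= esurv G (t + d).
Proof.
move=> t0 d0; set c := esurv G t => c0.
suff : (-1) * esurv G (t + d) + (1 + d / t * (ln c + 1)) * c <= d * c / t by lra.
apply: esurv_lin2_le; [lra | exact: ltW | move=> a _].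
by have := expR_shift_ge a c0 t0 d0; lra.
Qed.

Lemma esurv_shift_le (t s : R) : 0 < t -> 0 <= s -> s <= t -> 0 < esurv G t ->
  esurv G (t - s) <= esurv G t * (1 - s / ((1 + s) * t) * ln (esurv G t)).
Proof.
move=> t0 s0 st; set c := esurv G t => c0; set K := s / ((1 + s) * t).
suff : 1 * esurv G (t - s) + (K * (ln c + 1) - 1) * c <= K * c by lra.
apply: esurv_lin2_le; [lra | exact: ltW | move=> a a01].
by have := expR_shift_le c0 t0 s0 a01; rewrite -/K; lra.
Qed.

Lemma esurv_Tq (q t0 : R) : 0 < q -> 0 < t0 -> Tq q G = t0%:E -> esurv G t0 = q^-1.
Proof.
move=> q0 t00 hT; apply/eqP; rewrite eq_le; apply/andP; split.
- apply: (ler_of_expRN_mulr t00) => u u0 ut0.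
  have notadm : ~~ fdr_admissible q G (t0 - u).
    by apply/negP => /Tq_le; rewrite hT lee_fin; lra.
  rewrite fdr_admissibleE -?ltNge in notadm; last lra.
  have decay : expR (- u) * esurv G t0 <= esurv G (t0 - u).
    by have := @esurv_le_expR (t0 - u) t0; rewrite addrAC subrr add0r; apply; lra.
  have := expR_gt0 (- u); nra.
- apply: (ler_of_expRN_mulr ltr01) => u u0 _.
  have [t adm tu] : exists2 t, fdr_admissible q G t & t < t0 + u.
    by apply: Tq_lt; rewrite hT lte_fin; lra.
  have t0t : t0 <= t by rewrite -lee_fin -hT Tq_le.
  rewrite fdr_admissibleE in adm; last lra.
  have := esurv_le_expR (ltW t00) t0t.
  have : expR (- u) * q^-1 <= expR (t0 - t) * q^-1.
    by rewrite ler_pM2r ?invr_gt0 // ler_expR; lra.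
  have := expR_gt0 (t0 - t); nra.
Qed.

Lemma Tq_perturb_le (q t0 eps d : R) (G' : R -> R) :
  0 < q -> 0 < t0 -> Tq q G = t0%:E -> 0 <= d ->
  `|G (t0 + d) - G' (t0 + d)| <= eps ->
  expR (t0 + d) * eps <= q^-1 * ln q^-1 * d / t0 ->
  (Tq q G' <= (t0 + d)%:E)%E.
Proof.
move=> q0 t00 hT d0 close small; have h0 := esurv_Tq q0 t00 hT.
have grow : q^-1 * (1 + d / t0 * ln q^-1) <= esurv G (t0 + d).
  by rewrite -h0; apply: esurv_shift_ge => //; rewrite h0 invr_gt0.
have close_esurv : esurv G (t0 + d) - esurv G' (t0 + d) <= expR (t0 + d) * eps.
  apply: le_trans (ler_norm _) _; rewrite esurv_dist.
  by apply: ler_wpM2l => //; exact/ltW/expR_gt0.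
by apply: Tq_le; rewrite fdr_admissibleE; lra.
Qed.

Lemma Tq_perturb_ge (q t0 eps b : R) (G' : R -> R) :
  0 < q -> 0 < t0 -> Tq q G = t0%:E -> eps < q^-1 - 1 ->
  (forall t, `|G t - G' t| <= eps) ->
  expR t0 * eps * t0 <= q^-1 * ln q^-1 * b ->
  ((t0 - b)%:E <= Tq q G')%E.
Proof.
move=> q0 t00 hT eps_small close big; have h0 := esurv_Tq q0 t00 hT.
have eps0 : 0 <= eps := le_trans (normr_ge0 _) (close 0).
have cL0 : 0 < q^-1 * ln q^-1 by rewrite mulr_gt0 ?invr_gt0 // ln_gt0 //; lra.
apply: Tq_ge => t adm; rewrite leNgt; apply/negP => t_lt.
have [t_neg | t_ge0] := ltP t 0.
  move: adm; rewrite /fdr_admissible /Ecdf ifN -?ltNge // subr0 mulr1.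
  by have := close t; have := G_ge0 t; rewrite ler_norml; lra.
have b0 : 0 <= b.
  rewrite -(pmulr_rge0 _ cL0); apply: le_trans big.
  by rewrite !mulr_ge0 ?expR_ge0 // ltW.
set s := t0 - t.
have [s0 st0 bs] : [/\ 0 <= s, s <= t0 & b < s] by rewrite /s; split; lra.
have shrink : esurv G t <= q^-1 * (1 - s / ((1 + s) * t0) * ln q^-1).
  rewrite -h0 -[t](subKr t0) -/s.
  by apply: esurv_shift_le; rewrite ?h0 ?invr_gt0.
rewrite fdr_admissibleE // in adm.
have close_esurv : esurv G' t - esurv G t <= expR t * eps.
  apply: le_trans (ler_norm _) _; rewrite distrC esurv_dist.
  by apply: ler_wpM2l => //; exact/ltW/expR_gt0.
have gap : s * (q^-1 * ln q^-1) <= expR t * eps * ((1 + s) * t0).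
  have pos : 0 < (1 + s) * t0 by rewrite mulr_gt0 //; lra.
  by rewrite -[s in s * _](divfK (lt0r_neq0 pos)) mulrAC ler_pM2r //; lra.
have grow : expR t * (1 + s) <= expR t0.
  have -> : expR t0 = expR t * expR s by rewrite -expRD /s addrC subrK.
  by rewrite ler_pM2l ?expR_gt0 ?expR_ge1Dx.
have := ler_wpM2r (mulr_ge0 eps0 (ltW t00)) grow.
have : q^-1 * ln q^-1 * b < q^-1 * ln q^-1 * s by rewrite ltr_pM2l.
lra.
Qed.

Lemma Tq_perturb (q t0 eps delta : R) (G' : R -> R) :
  0 < q -> ln q^-1 < t0 -> Tq q G = t0%:E -> 0 <= delta -> eps < q^-1 - 1 ->
  (forall t, `|G t - G' t| <= eps) ->
  expR (q / ln q^-1 * t0 * expR t0 * eps * (1 + delta)) <= 1 + delta ->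
  (`|Tq q G' - t0%:E| <= (q / ln q^-1 * t0 * expR t0 * eps * (1 + delta))%:E)%E.
Proof.
move=> q0 ht0 hT delta0 eps_small close small.
have eps0 : 0 <= eps := le_trans (normr_ge0 _) (close 0).
have L0 : 0 < ln q^-1 by rewrite ln_gt0 //; lra.
have t00 : 0 < t0 := lt_trans L0 ht0.
set B := q / ln q^-1 * t0 * expR t0 * eps in small *.
have B0 : 0 <= B.
  by rewrite /B; do ![apply: mulr_ge0]; rewrite ?invr_ge0 ?expR_ge0 // ltW.
have scale : q^-1 * ln q^-1 * B = expR t0 * eps * t0.
  by rewrite /B; field; rewrite !lt0r_neq0.
have lower : ((t0 - B)%:E <= Tq q G')%E.
  by apply: (Tq_perturb_ge q0 t00 hT eps_small close); rewrite scale.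
have upper : (Tq q G' <= (t0 + B * (1 + delta))%:E)%E.
  apply: (Tq_perturb_le q0 t00 hT) => //; first by rewrite mulr_ge0 //; lra.
  have -> : q^-1 * ln q^-1 * (B * (1 + delta)) / t0 = expR t0 * eps * (1 + delta).
    by rewrite mulrA scale; field; rewrite lt0r_neq0.
  rewrite expRD mulrAC; apply: ler_wpM2l small.
  by rewrite mulr_ge0 ?expR_ge0.
move: lower upper; case: (Tq q G') => [r | |] //=; rewrite !lee_fin => lower upper.
rewrite ler_norml; nra.
Qed.

End exponential_mixture.

Theorem lemma4p5 (R : realType) (q : R) (hq0 : 0 < q) (hq1 : q < 1)
  (t0 : R) (ht0 : ln (q^-1) < t0) :
  forall delta : R, 0 < delta ->
  exists eta : R, 0 < eta /\
    forall eps : R, 0 < eps -> eps < eta ->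
      (omega_star q eps t0 <=
         ((q / ln (q^-1)) * t0 * expR t0 * eps * (1 + delta))%:E)%E.
Proof.
move=> delta delta0.
have c1 : 1 < q^-1 by rewrite invf_gt1.
have t00 : 0 < t0 by apply: lt_trans ht0; rewrite ln_gt0.
set A := q / ln q^-1 * t0 * expR t0 * (1 + delta).
have A0 : 0 < A by rewrite /A !mulr_gt0 ?invr_gt0 ?ln_gt0 ?expR_gt0 //; lra.
have lnD0 : 0 < ln (1 + delta) by rewrite ln_gt0 // ltrDl.
exists (Num.min (q^-1 - 1) (ln (1 + delta) / A)); split.
  by rewrite lt_min subr_gt0 c1 divr_gt0.
move=> eps eps0; rewrite lt_min => /andP[eps_c eps_A].
apply: ge_ereal_sup => _ [G' [_ [G [[F [F1 GF]] [hT ks]]]] <-].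
apply: (Tq_perturb F1 GF) => //; [exact: ltW | exact: ksdist_le |].
rewrite -[X in _ <= X]lnK ?posrE ?ler_expR; last lra.
have -> : q / ln q^-1 * t0 * expR t0 * eps * (1 + delta) = eps * A by rewrite /A; ring.
by rewrite ltW // -ltr_pdivlMr.
Qed.
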